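(* Consider the algorithm $\mathcal{S}$-DC on the half-line $[0,\infty)$ with source $0$ and speeds $(s_i)_{i\ge2}$. Let $x_1\ge x_2\ge\dots$ be the positions of its servers after serving a sequence of requests (with $x_i$ the $i$-th server from the right, servers at the source having position $0$). Then the total cost paid by $\mathcal{S}$-DC is $\sum_{i=1}^\infty z_i x_i$, where $z_1=1$ and $z_i=\frac{z_{i-1}}{s_i}+1+\frac{1}{s_i}$ for $i\ge2$.
   Context: Infinite server problem on the half-line $[0,\infty)$ with source $0$: an unbounded number of servers initially reside at $0$; requests (points of $[0,\infty)$) are revealed one by one and must be served immediately by moving a server to the request; the cost is the total distance traveled. Let $\mathcal{S}=\{s_i\ge1 : i\in\mathbb{N}, i\ge2\}$ be given by a monotonic (non-decreasing or non-increasing) sequence of speeds $s_i\ge1$. Denote by $x_i$ the $i$-th server from the right (also its position). Algorithm $\mathcal{S}$-DC: if a request lies between servers $x_{i+1}$ (to its left) and $x_i$ (to its right), move $x_{i+1}$ and $x_i$ towards it with speeds $s_{i+1}$ and $1$ respectively until one of them reaches it; if there is no server to the right of the request, move the rightmost server to the request. (With all $s_i=1$ this is the Double Coverage algorithm.) *)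

From Stdlib Require Import Reals Lra List.
From Coquelicot Require Import Coquelicot.
Open Scope R_scope.

(* A configuration is x : nat -> R where x i (i >= 1) is the position of the
   i-th server from the right; x 0 is unused.  Initially all servers at 0. *)
Definition config := nat -> R.

Definition upd (x : config) (i : nat) (v : R) : config :=
  fun j => if Nat.eqb j i then v else x j.

(* Time for which x_{i+1} (speed s_{i+1}) and x_i (speed 1) move towards r
   until one of them reaches r. *)
Definition dc_time (s : nat -> R) (x : config) (i : nat) (r : R) : R :=
  Rmin ((r - x (S i)) / s (S i)) (x i - r).

Inductive dc_step (s : nat -> R) (x : config) (r : R) : config -> R -> Prop :=
| dc_step_right :
    x 1%nat < r -> dc_step s x r (upd x 1 r) (r - x 1%nat)
| dc_step_hit : forall j : nat,
    (1 <= j)%nat -> x j = r -> dc_step s x r x 0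
| dc_step_between : forall i : nat,
    (1 <= i)%nat -> x (S i) < r -> r < x i ->
    dc_step s x r
      (upd (upd x i (x i - dc_time s x i r)) (S i)
           (x (S i) + s (S i) * dc_time s x i r))
      ((s (S i) + 1) * dc_time s x i r).

Inductive dc_run (s : nat -> R) : list R -> config -> R -> Prop :=
| dc_run_nil : dc_run s nil (fun _ => 0) 0
| dc_run_snoc : forall rs x c r x' c',
    dc_run s rs x c -> dc_step s x r x' c' ->
    dc_run s (rs ++ r :: nil) x' (c + c').

(* zc s n = z_{n+1}:  z_1 = 1, z_i = z_{i-1}/s_i + 1 + 1/s_i. *)
Fixpoint zc (s : nat -> R) (n : nat) : R :=
  match n with
  | O => 1
  | S m => zc s m / s (S (S m)) + 1 + 1 / s (S (S m))
  end.

(* The potential [Phi = sum_i z_i x_i] increases at every step by exactly the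
   cost of that step.  Serving a request to the right of all servers moves
   [x_1] (weight [z_1 = 1]) by the cost.  Serving a request between [x_(i+1)]
   and [x_i] for time [t] moves [x_i] left by [t] and [x_(i+1)] right by
   [s_(i+1) t], changing [Phi] by [(z_(i+1) s_(i+1) - z_i) t], which the
   recurrence for [z] makes equal to the cost [(s_(i+1) + 1) t].  Each step
   changes finitely many terms, so the series keeps converging. *)

From Stdlib Require Import Reals List Lra Lia.
From Coquelicot Require Import Coquelicot.
Open Scope R_scope.

Lemma is_series_0 : is_series (fun _ : nat => 0) 0.
Proof.
  change (is_lim_seq (sum_n (fun _ : nat => 0)) 0).
  apply (is_lim_seq_ext (fun _ => 0)); [| apply is_lim_seq_const].
  intro m; symmetry; exact (sum_n_m_const_zero 0 m).
Qed.

(* [is_series_decr_1] at type [R], with the limit written in real arithmetic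
   rather than with the [plus]/[opp] of the normed-module structure. *)
Lemma is_series_decr_1_R (a : nat -> R) (l : R) :
  is_series (fun k => a (S k)) (l - a O) -> is_series a l.
Proof. exact (is_series_decr_1 a l). Qed.

Lemma is_series_indicator (n : nat) (d : R) :
  is_series (fun k => if Nat.eqb k n then d else 0) d.
Proof.
  revert d; induction n as [|n IHn]; intro d; apply is_series_decr_1_R; simpl.
  - rewrite Rminus_diag; exact is_series_0.
  - rewrite Rminus_0_r; exact (IHn d).
Qed.

Lemma upd_neq (x : config) (i : nat) (v : R) (j : nat) :
  j <> i -> upd x i v j = x j.
Proof. intro Hji; unfold upd; apply Nat.eqb_neq in Hji; rewrite Hji; reflexivity. Qed.

Lemma is_series_upd (w : nat -> R) (x : config) (i : nat) (v l : R) :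
  is_series (fun n => w n * x (S n)) l ->
  is_series (fun n => w n * upd x (S i) v (S n)) (l + w i * (v - x (S i))).
Proof.
  intro Hx.
  eapply is_series_ext;
    [| exact (is_series_plus _ _ _ _ Hx (is_series_indicator i (w i * (v - x (S i)))))].
  intro n; unfold plus, upd; simpl.
  destruct (Nat.eqb_spec n i) as [->|_]; ring.
Qed.

Section SDoubleCoverage.

Variable s : nat -> R.

Hypothesis s_neq0 : forall i : nat, (2 <= i)%nat -> s i <> 0.

Lemma zc_S_mul (m : nat) :
  zc s (S m) * s (S (S m)) = zc s m + s (S (S m)) + 1.
Proof.
  assert (Hs : s (S (S m)) <> 0) by (apply s_neq0; lia).
  simpl; field; exact Hs.
Qed.

Lemma dc_step_is_series (x x' : config) (r c c' : R) :
  is_series (fun n => zc s n * x (S n)) c ->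
  dc_step s x r x' c' ->
  is_series (fun n => zc s n * x' (S n)) (c + c').
Proof.
  intros Hx Hstep; destruct Hstep as [_ | _ _ _ | i Hi _ _].
  - replace (c + (r - x 1%nat)) with (c + zc s 0 * (r - x 1%nat))
      by (simpl; ring).
    exact (is_series_upd (zc s) x 0 r c Hx).
  - rewrite Rplus_0_r; exact Hx.
  - destruct i as [|m]; [lia|].
    set (t := dc_time s x (S m) r).
    pose proof is_series_upd (zc s) _ (S m) (x (S (S m)) + s (S (S m)) * t) _
                (is_series_upd (zc s) x m (x (S m) - t) c Hx) as H.
    rewrite (upd_neq x (S m) _ (S (S m))) in H by lia.
    replace (c + (s (S (S m)) + 1) * t) with
      (c + zc s m * (x (S m) - t - x (S m))
         + zc s (S m) * (x (S (S m)) + s (S (S m)) * t - x (S (S m)))).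
    + exact H.
    + transitivity (c + t * (zc s (S m) * s (S (S m)) - zc s m)); [ring |].
      rewrite zc_S_mul; ring.
Qed.

Lemma dc_run_is_series (rs : list R) (x : config) (c : R) :
  dc_run s rs x c -> is_series (fun n => zc s n * x (S n)) c.
Proof.
  induction 1 as [|rs x c r x' c' _ IH Hstep].
  - eapply is_series_ext; [| exact is_series_0].
    intro n; symmetry; apply Rmult_0_r.
  - exact (dc_step_is_series _ _ _ _ _ IH Hstep).
Qed.

End SDoubleCoverage.

Theorem lemma1 (s : nat -> R)
  (Hs : forall i : nat, (2 <= i)%nat -> 1 <= s i)
  (Hmono : (forall i : nat, (2 <= i)%nat -> s i <= s (S i)) \/
           (forall i : nat, (2 <= i)%nat -> s (S i) <= s i))
  (rs : list R) (x : config) (c : R) :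
  List.Forall (fun r => 0 <= r) rs ->
  dc_run s rs x c ->
  is_series (fun n : nat => zc s n * x (S n)) c.
Proof.
  intros _.
  apply dc_run_is_series.
  intros i Hi; specialize (Hs i Hi); lra.
Qed.
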